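(* Let $(\alpha_n)_{n\ge0}$ be complex numbers with $|\alpha_n|<1$ and notation as in the context. For every integer $m$ and nonnegative integer $n$, \[ \det\left(\mu_{m+i-j}\right)_{0\le i,j\le n}=\prod_{k=0}^{n-1}(1-|\alpha_k|^2)^{n-k}\cdot\det\left(\mu_{m+i,j}\right)_{0\le i,j\le n}, \] where $\mu_{a,j}=\langle\Phi_j(z),z^a\rangle/\langle\Phi_j(z),\Phi_j(z)\rangle$ for integers $a$ and $j\ge0$, and the product is $1$ when $n=0$.
   Context: For a polynomial $f(z)=\sum_{k=0}^n a_kz^k$ of degree $n$, write $\overline{f}(z)=\sum_k\overline{a_k}z^k$ and $f^*(z)=z^n\overline{f}(1/z)$. Define monic $\Phi_n$ by $\Phi_0=1$, $\Phi_{n+1}(z)=z\Phi_n(z)-\overline{\alpha_n}\Phi_n^*(z)$. Let $\mathcal{L}$ be the unique linear functional on the space of Laurent polynomials with $\mathcal{L}(1)=1$ and $\mathcal{L}(\Phi_m(z)\overline{\Phi_n}(1/z))=0$ for $m\ne n$ (for a Laurent polynomial $g$, $\overline{g}$ conjugates all coefficients). Set $\langle f,g\rangle=\mathcal{L}(f(z)\overline{g}(1/z))$ and $\mu_k=\mathcal{L}(z^{-k})$ for integers $k$. *)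

From HB Require Import structures.
From mathcomp Require Import all_boot all_order all_algebra.
From mathcomp Require Import reals complex.
Set Implicit Arguments. Unset Strict Implicit. Unset Printing Implicit Defensive.
Import Order.TTheory GRing.Theory Num.Theory.
Local Open Scope ring_scope.

Section Defs.
Variable C : numClosedFieldType.

(* f^*(z) = z^n \bar f(1/z), n = deg f  (size f = n+1) *)
Definition pstar (f : {poly C}) : {poly C} :=
  \poly_(i < size f) (f`_(size f - 1 - i))^*.

Fixpoint Phi (alpha : nat -> C) (n : nat) : {poly C} :=
  match n with
  | 0 => 1
  | n'.+1 => 'X * Phi alpha n' - (alpha n')^* *: pstar (Phi alpha n')
  end.

(* A linear functional L on Laurent polynomials is determined (by linearity)
   by its values on the basis monomials z^k; we encode it by its moment
   sequence mu, mu k = L(z^(-k)), i.e. L(z^k) = mu (-k).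
   Lfun mu s applies L to the Laurent polynomial sum_(k,c) in s  c z^k. *)
Definition Lfun (mu : int -> C) (s : seq (int * C)) : C :=
  \sum_(p <- s) p.2 * mu (- p.1).

(* Laurent polynomial f(z) * conj(g)(1/z) = sum_{i,j} f_i conj(g_j) z^(i-j) *)
Definition mulLconj (f g : {poly C}) : seq (int * C) :=
  [seq ((i%:Z - j%:Z), f`_i * (g`_j)^*) | i <- iota 0 (size f), j <- iota 0 (size g)].

Definition ip (mu : int -> C) (f g : {poly C}) : C := Lfun mu (mulLconj f g).

Definition ipX (mu : int -> C) (f : {poly C}) (a : int) : C :=
  Lfun mu [seq (i%:Z - a, f`_i) | i <- iota 0 (size f)].

Definition mu2 (alpha : nat -> C) (mu : int -> C) (a : int) (j : nat) : C :=
  ipX mu (Phi alpha j) a / ip mu (Phi alpha j) (Phi alpha j).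

End Defs.

(* Write kappa_j = <Phi_j, Phi_j>. By linearity of L, mu_{a,j} is
   sum_l mu_{a-l} (Phi_j)_l / kappa_j, so (mu_{m+i,j}) is the Toeplitz matrix
   (mu_{m+i-j}) times the transposed coefficient matrix of Phi_0, ..., Phi_n,
   which is unitriangular since Phi_j is monic of degree j, times
   diag(1/kappa_j).  Orthogonality to Phi_0, ..., Phi_{j-1} makes Phi_j
   orthogonal to 1, z, ..., z^(j-1) on both sides, so kappa_j = <Phi_j, z^j>.
   Expanding <Phi_{j+1}, z^(j+1)> and <1, Phi_{j+1}> = 0 with the Szego
   recursion, using <Phi_j^*, z^a> = <z^(j-a), Phi_j>, gives
   kappa_{j+1} = (1 - |alpha_j|^2) kappa_j.  Hence kappa_j is
   prod_(k<j) (1 - |alpha_k|^2), and prod_(j<=n) kappa_j is the stated factor. *)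

From HB Require Import structures.
From mathcomp Require Import all_boot all_order all_algebra.
From mathcomp Require Import reals complex.
From mathcomp Require Import zify ring.
Set Implicit Arguments. Unset Strict Implicit. Unset Printing Implicit Defensive.
Import Order.TTheory GRing.Theory Num.Theory.
Local Open Scope ring_scope.

Lemma sum_iota0 (V : nmodType) (F : nat -> V) n :
  \sum_(i <- iota 0 n) F i = \sum_(i < n) F i.
Proof. by rewrite -(big_mkord xpredT F) /index_iota subn0. Qed.

Lemma sum_coef_widen (R : nzRingType) (V : nmodType) (F : nat -> R -> V)
    (f : {poly R}) N :
  (size f <= N)%N -> (forall i, F i 0 = 0) ->
  \sum_(i < size f) F i f`_i = \sum_(i < N) F i f`_i.
Proof.
move=> fN F0; rewrite (big_ord_widen N (fun i => F i f`_i) fN) big_mkcond /=.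
by apply: eq_bigr => i _; case: ltnP => // /(nth_default 0) ->.
Qed.

Lemma size_polyB_leq (R : nzRingType) (f g : {poly R}) :
  (size (f - g)%R <= maxn (size f) (size g))%N.
Proof. by rewrite -(size_polyN g) size_polyD. Qed.

Lemma size_mulX_leq (R : nzRingType) (f : {poly R}) : (size ('X * f)%R <= (size f).+1)%N.
Proof. by apply: leq_trans (size_polyMleq _ _) _; rewrite size_polyX. Qed.

Section PairingWithMonomials.
Variables (C : numClosedFieldType) (mu : int -> C).

(* [ipXl a g] is <z^a, g>, the mirror image of [ipX mu f a] = <f, z^a>. *)
Definition ipXl (a : int) (g : {poly C}) : C :=
  \sum_(j < size g) (g`_j)^* * mu (j%:Z - a).

Lemma ipXE N (f : {poly C}) (a : int) : (size f <= N)%N ->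
  ipX mu f a = \sum_(i < N) f`_i * mu (a - i%:Z).
Proof.
move=> fN; rewrite -(sum_coef_widen (F := fun i c => c * mu (a - i%:Z)) fN) => [|i].
  by rewrite /ipX /Lfun big_map sum_iota0; apply: eq_bigr => i _ /=; rewrite opprB.
exact: mul0r.
Qed.

Lemma ipXlE N (a : int) (g : {poly C}) : (size g <= N)%N ->
  ipXl a g = \sum_(j < N) (g`_j)^* * mu (j%:Z - a).
Proof.
move=> gN; apply: (sum_coef_widen (F := fun j c => c^* * mu (j%:Z - a)) gN) => j.
by rewrite conjC0 mul0r.
Qed.

Lemma ip_sum_coef (f g : {poly C}) : ip mu f g =
  \sum_(i < size f) \sum_(j < size g) f`_i * (g`_j)^* * mu (j%:Z - i%:Z).
Proof.
rewrite /ip /Lfun /mulLconj big_allpairs_dep /= sum_iota0.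
by apply: eq_bigr => i _; rewrite sum_iota0; apply: eq_bigr => j _ /=; rewrite opprB.
Qed.

Lemma ip_sum_ipX N (f g : {poly C}) : (size g <= N)%N ->
  ip mu f g = \sum_(j < N) (g`_j)^* * ipX mu f j.
Proof.
move=> gN; rewrite ip_sum_coef exchange_big /=.
rewrite -(sum_coef_widen (F := fun j c => c^* * ipX mu f j) gN) => [|j]; last first.
  by rewrite conjC0 mul0r.
apply: eq_bigr => j _; rewrite (ipXE _ (leqnn _)) mulr_sumr.
by apply: eq_bigr => i _; rewrite mulrCA mulrA.
Qed.

Lemma ip_sum_ipXl N (f g : {poly C}) : (size f <= N)%N ->
  ip mu f g = \sum_(i < N) f`_i * ipXl i g.
Proof.
move=> fN; rewrite ip_sum_coef.
rewrite -(sum_coef_widen (F := fun i c => c * ipXl i g) fN) => [|i]; last exact: mul0r.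
by apply: eq_bigr => i _; rewrite mulr_sumr; apply: eq_bigr => j _; rewrite mulrA.
Qed.

Lemma ipXB (f g : {poly C}) (a : int) : ipX mu (f - g) a = ipX mu f a - ipX mu g a.
Proof.
have [fN gN] := (leq_maxl (size f) (size g), leq_maxr (size f) (size g)).
rewrite !(ipXE _ (size_polyB_leq _ _)) (ipXE _ fN) (ipXE _ gN) -sumrB.
by apply: eq_bigr => i _; rewrite coefB mulrBl.
Qed.

Lemma ipXZ (c : C) (f : {poly C}) (a : int) : ipX mu (c *: f) a = c * ipX mu f a.
Proof.
rewrite (ipXE _ (size_scale_leq c f)) (ipXE _ (leqnn _)) mulr_sumr.
by apply: eq_bigr => i _; rewrite coefZ mulrA.
Qed.

Lemma ipXlB (a : int) (f g : {poly C}) : ipXl a (f - g) = ipXl a f - ipXl a g.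
Proof.
have [fN gN] := (leq_maxl (size f) (size g), leq_maxr (size f) (size g)).
rewrite !(ipXlE _ (size_polyB_leq _ _)) (ipXlE _ fN) (ipXlE _ gN) -sumrB.
by apply: eq_bigr => i _; rewrite coefB rmorphB mulrBl.
Qed.

Lemma ipXlZ (a : int) (c : C) (f : {poly C}) : ipXl a (c *: f) = c^* * ipXl a f.
Proof.
rewrite (ipXlE _ (size_scale_leq c f)) (ipXlE _ (leqnn _)) mulr_sumr.
by apply: eq_bigr => i _; rewrite coefZ rmorphM mulrA.
Qed.

Lemma ipX_mulX (f : {poly C}) (a : int) : ipX mu ('X * f) a = ipX mu f (a - 1).
Proof.
rewrite (ipXE _ (size_mulX_leq f)) (ipXE _ (leqnn _)) big_ord_recl coefXM mul0r add0r.
apply: eq_bigr => i _; rewrite lift0 coefXM /=.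
by congr (_ * mu _); rewrite intS opprD addrA.
Qed.

Lemma ipXl_mulX (a : int) (f : {poly C}) : ipXl a ('X * f) = ipXl (a - 1) f.
Proof.
rewrite (ipXlE _ (size_mulX_leq f)) (ipXlE _ (leqnn _)) big_ord_recl.
rewrite coefXM conjC0 mul0r add0r.
apply: eq_bigr => i _; rewrite lift0 coefXM /=.
by congr (_ * mu _); rewrite intS opprB addrCA addrA.
Qed.

Lemma coef_pstar (f : {poly C}) i :
  (pstar f)`_i = if (i < size f)%N then (f`_(size f - 1 - i))^* else 0.
Proof. exact: coef_poly. Qed.

Lemma size_pstar_leq (f : {poly C}) : (size (pstar f) <= size f)%N.
Proof. exact: size_poly. Qed.

Lemma ipX_pstar (f : {poly C}) n (a : int) : size f = n.+1 ->
  ipX mu (pstar f) a = ipXl (n%:Z - a) f.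
Proof.
move=> fn; have fsN : (size (pstar f) <= n.+1)%N by rewrite -fn size_pstar_leq.
rewrite (ipXE _ fsN) (ipXlE _ (eq_leq fn)) (reindex_inj rev_ord_inj) /=.
apply: eq_bigr => i _; have := ltn_ord i; rewrite coef_pstar fn subn1 /= => ltin.
rewrite ifT; last by lia.
have -> : (n - (n - i))%N = i by lia.
by congr (_ * mu _); lia.
Qed.

Lemma ipXl_pstar (a : int) (f : {poly C}) n : size f = n.+1 ->
  ipXl a (pstar f) = ipX mu f (n%:Z - a).
Proof.
move=> fn; have fsN : (size (pstar f) <= n.+1)%N by rewrite -fn size_pstar_leq.
rewrite (ipXlE _ fsN) (ipXE _ (eq_leq fn)) (reindex_inj rev_ord_inj) /=.
apply: eq_bigr => i _; have := ltn_ord i; rewrite coef_pstar fn subn1 /= => ltin.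
rewrite ifT; last by lia.
have -> : (n - (n - i))%N = i by lia.
by rewrite conjCK; congr (_ * mu _); lia.
Qed.

End PairingWithMonomials.

Lemma det_coef_mx_monic (R : comNzRingType) n (P : nat -> {poly R}) :
  (forall j, size (P j) <= j.+1)%N -> (forall j, (P j)`_j = 1) ->
  \det (\matrix_(j < n, l < n) (P j)`_l) = 1.
Proof.
move=> sizeP coefP; have /det_trig -> : is_trig_mx (\matrix_(j < n, l < n) (P j)`_l).
  by apply/is_trig_mxP => j l ltjl; rewrite mxE nth_default // (leq_trans (sizeP j)).
by rewrite big1 // => j _; rewrite mxE.
Qed.

Lemma prod_prefix_prods (R : comNzRingType) (a : nat -> R) n :
  \prod_(j < n.+1) \prod_(k < j) a k = \prod_(k < n) a k ^+ (n - k).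
Proof.
elim: n => [|n IHn]; first by rewrite big_ord1 !big_ord0.
rewrite big_ord_recr IHn /= [RHS]big_ord_recr /= subSnn expr1 big_ord_recr mulrA -big_split.
by congr (_ * _); apply: eq_bigr => k _; rewrite subSn ?exprSr // ltnW.
Qed.

Section Szego.
Variables (C : numClosedFieldType) (alpha : nat -> C) (mu : int -> C).

Lemma size_Phi n : size (Phi alpha n) = n.+1.
Proof.
elim: n => [|n IHn] /=; first exact: size_poly1.
have sXP : size ('X * Phi alpha n) = n.+2.
  by rewrite mulrC size_mulX ?IHn // -size_poly_eq0 IHn.
rewrite size_polyDl sXP // size_polyN.
by apply: leq_ltn_trans (size_scale_leq _ _) _; rewrite -IHn ltnS size_pstar_leq.
Qed.

Lemma coef_Phi_deg n : (Phi alpha n)`_n = 1.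
Proof.
elim: n => [|n IHn] /=; first by rewrite coef1.
by rewrite coefB coefXM coefZ coef_pstar size_Phi ltnn mulr0 subr0.
Qed.

Section Orthogonality.
Hypothesis Phi_orth : forall m n : nat, m <> n -> ip mu (Phi alpha m) (Phi alpha n) = 0.

Lemma ipX_Phi_lt n k : (k < n)%N -> ipX mu (Phi alpha n) k = 0.
Proof.
elim/ltn_ind: k => k IHk ltkn; have /Phi_orth : n <> k by lia.
rewrite (ip_sum_ipX mu _ (eq_leq (size_Phi k))) big_ord_recr /= coef_Phi_deg conjC1 mul1r.
rewrite big1 ?add0r // => j _.
by rewrite IHk ?mulr0 //; have := ltn_ord j; lia.
Qed.

Lemma ipXl_Phi_lt n k : (k < n)%N -> ipXl mu k (Phi alpha n) = 0.
Proof.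
elim/ltn_ind: k => k IHk ltkn; have /Phi_orth : k <> n by lia.
rewrite (ip_sum_ipXl mu _ (eq_leq (size_Phi k))) big_ord_recr /= coef_Phi_deg mul1r.
rewrite big1 ?add0r // => j _.
by rewrite IHk ?mulr0 //; have := ltn_ord j; lia.
Qed.

Lemma ip_Phi_ipX n : ip mu (Phi alpha n) (Phi alpha n) = ipX mu (Phi alpha n) n.
Proof.
rewrite (ip_sum_ipX mu _ (eq_leq (size_Phi n))) big_ord_recr /= coef_Phi_deg conjC1 mul1r.
by rewrite big1 ?add0r // => j _; rewrite ipX_Phi_lt ?mulr0.
Qed.

Lemma ip_PhiS n : ip mu (Phi alpha n.+1) (Phi alpha n.+1)
  = ip mu (Phi alpha n) (Phi alpha n) * (1 - `|alpha n| ^+ 2).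
Proof.
set c := Phi alpha n; set kappa := ip mu c c.
have ipXl_c : ipXl mu (-1) c = alpha n * kappa.
  have /eqP := ipXl_Phi_lt (ltn0Sn n).
  rewrite /= ipXlB ipXl_mulX ipXlZ (ipXl_pstar _ _ (size_Phi n)) conjCK subr0 -ip_Phi_ipX.
  by rewrite subr_eq0 => /eqP.
rewrite [LHS]ip_Phi_ipX /= ipXB ipX_mulX ipXZ (ipX_pstar _ _ (size_Phi n)).
have -> : n.+1%:Z - 1 = n by lia.
have -> : n%:Z - n.+1%:Z = -1 by lia.
by rewrite ipXl_c -ip_Phi_ipX -/c -/kappa normCK; ring.
Qed.

Hypothesis mu0 : mu 0 = 1.

Lemma ip_Phi_prod n :
  ip mu (Phi alpha n) (Phi alpha n) = \prod_(k < n) (1 - `|alpha k| ^+ 2).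
Proof.
elim: n => [|n IHn]; last by rewrite ip_PhiS IHn big_ord_recr.
rewrite big_ord0 ip_Phi_ipX (ipXE _ _ (eq_leq (size_Phi 0))) big_ord1.
by rewrite coef_Phi_deg subrr mu0 mul1r.
Qed.

End Orthogonality.

Lemma mu2_mx_factor (m : int) n :
  \matrix_(i < n, j < n) mu2 alpha mu (m + i%:Z) j =
  \matrix_(i < n, j < n) mu (m + i%:Z - j%:Z)
    *m (\matrix_(j < n, l < n) (Phi alpha j)`_l)^T
    *m diag_mx (\row_(j < n) (ip mu (Phi alpha j) (Phi alpha j))^-1).
Proof.
apply/matrixP => i j; rewrite mul_mx_diag !mxE /mu2.
rewrite (ipXE _ _ (_ : size (Phi alpha j) <= n)%N) ?size_Phi //; congr (_ * _).
by apply: eq_bigr => l _; rewrite !mxE mulrC.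
Qed.

End Szego.

Local Open Scope complex_scope.

Theorem proposition2p6 (R : realType) (alpha : nat -> R[i]) (mu : int -> R[i])
  (halpha : forall k : nat, `|alpha k| < 1)
  (hL1 : mu 0 = 1)
  (hLorth : forall m n : nat, m <> n -> ip mu (Phi alpha m) (Phi alpha n) = 0)
  (m : int) (n : nat) :
  \det (\matrix_(i < n.+1, j < n.+1) mu (m + i%:Z - j%:Z))
  = (\prod_(k < n) (1 - `|alpha k| ^+ 2) ^+ (n - k)%N)
    * \det (\matrix_(i < n.+1, j < n.+1) mu2 alpha mu (m + i%:Z) j).
Proof.
have factor_neq0 k : 1 - `|alpha k| ^+ 2 != 0.
  by rewrite subr_eq0 eq_sym lt_eqF // exprn_ilt1.
have prod_neq0 : \prod_(k < n) (1 - `|alpha k| ^+ 2) ^+ (n - k) != 0.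
  by apply/prodf_neq0 => k _; rewrite expf_neq0.
rewrite mu2_mx_factor !det_mulmx det_tr.
rewrite (det_coef_mx_monic _ (fun j => eq_leq (size_Phi alpha j)) (coef_Phi_deg alpha)).
rewrite det_diag; under eq_bigr => j _ do rewrite mxE (ip_Phi_prod hLorth hL1).
rewrite prodfV (prod_prefix_prods (fun k => 1 - `|alpha k| ^+ 2)).
by rewrite mulr1 mulrCA mulfV ?mulr1.
Qed.
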